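(* Let $T$ be a prae-dilator. If $(X,\iota_X,L_X)$ is a good Bachmann-Howard system for $T$, then $(\vartheta_T(X),\iota_{\vartheta_T(X)},L_{\vartheta_T(X)})$ is also a good Bachmann-Howard system for $T$, where $\iota_{\vartheta_T(X)}:\vartheta_T(X)\to\vartheta_T(\vartheta_T(X))$ is defined by $\iota_{\vartheta_T(X)}(\vartheta\sigma)=\vartheta\,T_{\iota_X}(\sigma)$.
   Context: The finite subset functor $[\cdot]^{<\omega}$ sends a set $X$ to the set of its finite subsets and a function $f$ to $[f]^{<\omega}(a)=\{f(x)\mid x\in a\}$; subsets of linear orders are regarded as suborders. A prae-dilator consists of an endofunctor $X\mapsto T_X$ on the category of linear orders (morphisms: order embeddings) and a natural transformation $\operatorname{supp}^T:T\Rightarrow[\cdot]^{<\omega}$ such that for every linear order $X$ and every $\sigma\in T_X$ we have $\sigma\in\operatorname{rng}(T_{\iota_\sigma})$, where $\iota_\sigma:\operatorname{supp}^T_X(\sigma)\hookrightarrow X$ is the inclusion. For a linear order $Z$ and finite $a,b\subseteq Z$ write $a<^{\operatorname{fin}}_Z b$ iff for every $s\in a$ there is $t\in b$ with $s<_Z t$; $\leq^{\operatorname{fin}}_Z$ is defined analogously with $\leq_Z$; singletons $\{s\}$ are written $s$. For a linear order $X$ let $\vartheta_T(X)$ be the set of formal terms $\vartheta\sigma$ with $\sigma\in T_X$. A Bachmann-Howard system (for $T$) is a triple $(X,\iota_X,L_X)$ with $X$ a linear order, $\iota_X:X\to\vartheta_T(X)$ and $L_X:X\to\omega$ functions, such that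 $L_{\vartheta_T(X)}\circ\iota_X=L_X$, where $L_{\vartheta_T(X)}(\vartheta\sigma):=\max\{L_X(x)\mid x\in\operatorname{supp}^T_X(\sigma)\}+1$ (maximum of the empty set is $0$). For such a system the linear order $\vartheta\sigma<_{\vartheta_T(X)}\vartheta\tau$ is defined by recursion on $L_{\vartheta_T(X)}(\vartheta\sigma)+L_{\vartheta_T(X)}(\vartheta\tau)$ to hold iff either (a) $\sigma<_{T_X}\tau$ and $[\iota_X]^{<\omega}(\operatorname{supp}^T_X(\sigma))<^{\operatorname{fin}}_{\vartheta_T(X)}\vartheta\tau$, or (b) $\tau<_{T_X}\sigma$ and $\vartheta\sigma\leq^{\operatorname{fin}}_{\vartheta_T(X)}[\iota_X]^{<\omega}(\operatorname{supp}^T_X(\tau))$. A Bachmann-Howard system $(X,\iota_X,L_X)$ is good if $\iota_X:X\to\vartheta_T(X)$ is an order embedding with respect to $<_X$ and $<_{\vartheta_T(X)}$ (so that $T_{\iota_X}:T_X\to T_{\vartheta_T(X)}$ is defined). The order on $\vartheta_T(\vartheta_T(X))$ is the one obtained from the system $(\vartheta_T(X),\iota_{\vartheta_T(X)},L_{\vartheta_T(X)})$ by the same recursive definition. *)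

From Stdlib Require Import List PeanoNat ProofIrrelevance.
Import ListNotations.
Set Implicit Arguments.

Record LO : Type := MkLO {
  car :> Type;
  lt : car -> car -> Prop;
  lt_irrefl : forall x, ~ lt x x;
  lt_trans : forall x y z, lt x y -> lt y z -> lt x z;
  lt_total : forall x y, lt x y \/ x = y \/ lt y x
}.
Arguments lt {l} _ _.
Arguments lt_irrefl {l} _ _.
Arguments lt_trans {l} _ _ _ _ _.
Arguments lt_total {l} _ _.

Definition is_linear_order (C : Type) (r : C -> C -> Prop) : Prop :=
  (forall x, ~ r x x) /\
  (forall x y z, r x y -> r y z -> r x z) /\
  (forall x y, r x y \/ x = y \/ r y x).

Definition LO_of (C : Type) (r : C -> C -> Prop) (H : is_linear_order r) : LO :=
  MkLO r (proj1 H) (proj1 (proj2 H)) (proj2 (proj2 H)).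

Record Emb (X Y : LO) : Type := MkEmb {
  emb :> X -> Y;
  emb_mono : forall {x y}, lt x y -> lt (emb x) (emb y)
}.

Definition emb_id (X : LO) : Emb X X := @MkEmb X X (fun x => x) (fun x y h => h).
Definition emb_comp (X Y Z : LO) (g : Emb Y Z) (f : Emb X Y) : Emb X Z :=
  @MkEmb X Z (fun x => g (f x)) (fun x y h => emb_mono g (emb_mono f h)).

(** finite subsets are represented by lists, compared up to membership;
    a finite subset of a linear order, regarded as a suborder *)
Definition sub_lt (X : LO) (a : list X) (x y : {x : X | In x a}) : Prop :=
  lt (proj1_sig x) (proj1_sig y).

Lemma sub_is_linear (X : LO) (a : list X) : is_linear_order (@sub_lt X a).
Proof.
  unfold sub_lt; split; [|split].
  - intros [x hx]; apply lt_irrefl.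
  - intros [x hx] [y hy] [z hz]; apply lt_trans.
  - intros [x hx] [y hy]; simpl.
    destruct (lt_total x y) as [h|[h|h]]; auto.
    right; left; subst; f_equal; apply proof_irrelevance.
Qed.

Definition subLO (X : LO) (a : list X) : LO := LO_of (sub_is_linear X a).
Arguments subLO {X} a.

Definition incl_emb (X : LO) (a : list X) : Emb (subLO a) X :=
  @MkEmb (subLO a) X (fun x => proj1_sig x) (fun x y h => h).
Arguments incl_emb {X} a.

Record praedilator : Type := MkPD {
  Tobj :> LO -> LO;
  Tmap : forall X Y : LO, Emb X Y -> Emb (Tobj X) (Tobj Y);
  Tmap_id : forall (X : LO) (s : Tobj X), @Tmap X X (@emb_id X) s = s;
  Tmap_comp : forall (X Y Z : LO) (g : Emb Y Z) (f : Emb X Y) (s : Tobj X),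
      @Tmap X Z (emb_comp g f) s = @Tmap Y Z g (@Tmap X Y f s);
  supp : forall X : LO, Tobj X -> list X;
  supp_nat : forall (X Y : LO) (f : Emb X Y) (s : Tobj X) (y : Y),
      In y (@supp Y (@Tmap X Y f s)) <-> In y (map f (@supp X s));
  supp_cond : forall (X : LO) (s : Tobj X),
      exists s0 : Tobj (subLO (@supp X s)),
        @Tmap (subLO (@supp X s)) X (incl_emb (@supp X s)) s0 = s
}.
Arguments Tmap _ {X Y} _.
Arguments supp _ {X} _.

Inductive theta (T : praedilator) (X : LO) : Type :=
  | vartheta : T X -> theta T X.
Arguments vartheta {T X} _.

Definition maxlist (l : list nat) : nat := fold_right Nat.max 0 l.

Section Theta.
Variables (T : praedilator) (X : LO) (iota : X -> theta T X) (L : X -> nat).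

Definition Ltheta (a : theta T X) : nat :=
  match a with vartheta s => S (maxlist (map L (supp T s))) end.

(** the order on vartheta_T(X), by recursion with a fuel parameter bounding
    L(vartheta s) + L(vartheta t) *)
Fixpoint theta_lt_fuel (k : nat) (a b : theta T X) : Prop :=
  match k with
  | 0 => False
  | S k' =>
    match a, b with
    | vartheta s, vartheta t =>
      (lt s t /\ forall x, In x (supp T s) -> theta_lt_fuel k' (iota x) b)
      \/
      (lt t s /\ exists y, In y (supp T t) /\
                  (theta_lt_fuel k' a (iota y) \/ a = iota y))
    end
  end.

Definition theta_lt (a b : theta T X) : Prop :=
  theta_lt_fuel (S (Ltheta a + Ltheta b)) a b.

Definition BH_system : Prop := forall x : X, Ltheta (iota x) = L x.

Definition iota_mono : Prop :=
  forall x y : X, lt x y -> theta_lt (iota x) (iota y).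

Definition good : Prop := is_linear_order theta_lt /\ iota_mono.

End Theta.

Definition ThetaLO (T : praedilator) (X : LO) (iota : X -> theta T X) (L : X -> nat)
  (H : is_linear_order (theta_lt iota L)) : LO := LO_of H.

Definition iota_next (T : praedilator) (X : LO) (iota : X -> theta T X) (L : X -> nat)
  (H : is_linear_order (theta_lt iota L)) (Hm : iota_mono iota L)
  (a : ThetaLO H) : theta T (ThetaLO H) :=
  match a with
  | vartheta s => vartheta (Tmap T (@MkEmb X (ThetaLO H) iota Hm) s)
  end.
Arguments iota_next {T X iota L} H Hm a.

(* Since L_X = L o iota_X, every recursive call in the definition of
   <_{vartheta_T(X)} goes from vartheta s to some iota_X x with x in supp s,
   and so strictly decreases the measure L(vartheta s) + L(vartheta t).
   Induction on this measure shows that the order on vartheta_T(X) of any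
   Bachmann-Howard system is linear. An embedding f : X -> Y commuting with
   the systems' iota maps transports each clause of the definition along
   T_f, because supp(T_f s) = [f](supp s); hence vartheta s |-> vartheta T_f(s)
   is an embedding. For f = iota_X this map is iota_{vartheta_T(X)}, and it
   preserves L because supp is natural. *)

From Stdlib Require Import List Lia Classical.
Set Implicit Arguments.

Lemma maxlist_ub (A : Type) (f : A -> nat) (l : list A) x :
  In x l -> f x <= maxlist (map f l).
Proof.
  induction l as [|y l IH]; simpl; [tauto|].
  intros [<-|h]; [lia|]. specialize (IH h). lia.
Qed.

Lemma maxlist_lub (A : Type) (f : A -> nat) (l : list A) n :
  (forall x, In x l -> f x <= n) -> maxlist (map f l) <= n.
Proof.
  induction l as [|y l IH]; simpl; intros h; [lia|].
  assert (f y <= n) by auto. assert (maxlist (map f l) <= n) by auto. lia.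
Qed.

Lemma maxlist_map_same_elements (A : Type) (f : A -> nat) (l1 l2 : list A) :
  (forall y, In y l1 <-> In y l2) -> maxlist (map f l1) = maxlist (map f l2).
Proof.
  intros h.
  enough (maxlist (map f l1) <= maxlist (map f l2) /\
          maxlist (map f l2) <= maxlist (map f l1)) by lia.
  split; apply maxlist_lub; intros x hx; apply maxlist_ub, h; exact hx.
Qed.

Definition theta_map (T : praedilator) (X Y : LO) (f : Emb X Y)
  (a : theta T X) : theta T Y :=
  match a with vartheta s => vartheta (Tmap T f s) end.

Lemma Ltheta_theta_map (T : praedilator) (X Y : LO) (f : Emb X Y)
  (L : X -> nat) (L' : Y -> nat) :
  (forall x, L' (f x) = L x) ->
  forall a : theta T X, Ltheta L' (theta_map f a) = Ltheta L a.
Proof.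
  intros hL [s]; simpl; f_equal.
  rewrite (maxlist_map_same_elements L' _ _ (supp_nat T f s)), map_map.
  f_equal; apply map_ext; exact hL.
Qed.

Section Order.

Variables (T : praedilator) (X : LO) (iota : X -> theta T X) (L : X -> nat).
Hypothesis HBH : BH_system iota L.

Notation Lt := (Ltheta L).
Notation tlt := (theta_lt iota L).

Lemma Ltheta_iota_supp_lt {s x} :
  In x (supp T s) -> Lt (iota x) < Lt (vartheta s).
Proof.
  intros h; rewrite HBH; simpl.
  pose proof (maxlist_ub L _ _ h); lia.
Qed.

Lemma Ltheta_pos (a : theta T X) : 0 < Lt a.
Proof. destruct a; simpl; lia. Qed.

Definition theta_lt_step (R : theta T X -> theta T X -> Prop)
  (a b : theta T X) : Prop :=
  match a, b with
  | vartheta s, vartheta t =>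
    (lt s t /\ forall x, In x (supp T s) -> R (iota x) b) \/
    (lt t s /\ exists y, In y (supp T t) /\ (R a (iota y) \/ a = iota y))
  end.

Lemma theta_lt_step_mono (R R' : theta T X -> theta T X -> Prop) a b :
  (forall a' b', Lt a' + Lt b' < Lt a + Lt b -> R a' b' -> R' a' b') ->
  theta_lt_step R a b -> theta_lt_step R' a b.
Proof.
  destruct a as [s], b as [t]; simpl; intros hR.
  intros [[h k]|[h [y [hy k]]]]; [left|right]; split; try exact h.
  - intros x hx. apply hR, k, hx.
    pose proof (Ltheta_iota_supp_lt hx); simpl in *; lia.
  - exists y; split; [exact hy|]. destruct k as [k|k]; [left|right; exact k].
    apply hR, k. pose proof (Ltheta_iota_supp_lt hy); simpl in *; lia.
Qed.

Lemma theta_lt_step_ext (R R' : theta T X -> theta T X -> Prop) a b :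
  (forall a' b', Lt a' + Lt b' < Lt a + Lt b -> R a' b' <-> R' a' b') ->
  theta_lt_step R a b <-> theta_lt_step R' a b.
Proof.
  intros hR; split; apply theta_lt_step_mono; firstorder.
Qed.

Lemma theta_lt_fuel_irrelevant k k' a b :
  Lt a + Lt b < k -> Lt a + Lt b < k' ->
  theta_lt_fuel iota k a b <-> theta_lt_fuel iota k' a b.
Proof.
  revert k' a b; induction k as [|k IH]; intros [|k'] a b hk hk'; try lia.
  change (theta_lt_step (theta_lt_fuel iota k) a b <->
          theta_lt_step (theta_lt_fuel iota k') a b).
  apply theta_lt_step_ext; intros a' b' h; apply IH; lia.
Qed.

Lemma theta_lt_unfold a b : tlt a b <-> theta_lt_step tlt a b.
Proof.
  change (theta_lt_step (theta_lt_fuel iota (Lt a + Lt b)) a b <->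
          theta_lt_step tlt a b).
  apply theta_lt_step_ext; intros a' b' h.
  apply theta_lt_fuel_irrelevant; lia.
Qed.

Lemma theta_lt_irrefl a : ~ tlt a a.
Proof.
  destruct a as [s]; rewrite theta_lt_unfold.
  intros [[h _]|[h _]]; exact (lt_irrefl _ h).
Qed.

Lemma theta_lt_asym_bounded n a b :
  Lt a + Lt b <= n -> tlt a b -> tlt b a -> False.
Proof.
  revert a b; induction n as [|n IH]; intros a b hn h1 h2.
  { pose proof (Ltheta_pos a); lia. }
  destruct a as [s], b as [t]; rewrite theta_lt_unfold in h1, h2.
  destruct h1 as [[h1 k1]|[h1 [y [hy k1]]]];
  destruct h2 as [[h2 k2]|[h2 [x [hx k2]]]];
    try exact (lt_irrefl _ (lt_trans _ _ _ h1 h2)).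
  - destruct k2 as [k2|k2];
      [|rewrite k2 in k1; exact (theta_lt_irrefl _ (k1 x hx))].
    pose proof (Ltheta_iota_supp_lt hx).
    apply (IH (iota x) (vartheta t)); auto; lia.
  - destruct k1 as [k1|k1];
      [|rewrite k1 in k2; exact (theta_lt_irrefl _ (k2 y hy))].
    pose proof (Ltheta_iota_supp_lt hy).
    apply (IH (vartheta s) (iota y)); auto; lia.
Qed.

Lemma theta_lt_trans_bounded n a b c :
  Lt a + Lt b + Lt c <= n -> tlt a b -> tlt b c -> tlt a c.
Proof.
  revert a b c; induction n as [|n IH]; intros a b c hn hab hbc.
  { pose proof (Ltheta_pos a); lia. }
  destruct a as [r], b as [s], c as [t].
  assert (below_c : forall y, In y (supp T t) -> tlt (vartheta s) (iota y) \/
                      vartheta s = iota y -> tlt (vartheta r) (iota y)).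
  { intros y hy [k|<-]; [|exact hab].
    pose proof (Ltheta_iota_supp_lt hy).
    apply (IH _ (vartheta s)); auto; lia. }
  assert (above_a : lt r t -> (forall z, In z (supp T r) ->
                      tlt (iota z) (vartheta s)) -> tlt (vartheta r) (vartheta t)).
  { intros e k; apply theta_lt_unfold; left; split; [exact e|].
    intros z hz; pose proof (Ltheta_iota_supp_lt hz).
    apply (IH _ (vartheta s)); auto; lia. }
  pose proof hab as hab'; pose proof hbc as hbc'.
  rewrite theta_lt_unfold in hab, hbc.
  destruct hab as [[h1 k1]|[h1 [x [hx k1]]]];
  destruct hbc as [[h2 k2]|[h2 [y [hy k2]]]].
  - exact (above_a (lt_trans _ _ _ h1 h2) k1).
  - destruct (lt_total r t) as [e|[<-|e]].
    + exact (above_a e k1).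
    + exfalso; exact (theta_lt_asym_bounded _ _ (le_n _) hab' hbc').
    + apply theta_lt_unfold; right; split; [exact e|].
      exists y; split; [exact hy|left; exact (below_c y hy k2)].
  - destruct k1 as [k1|k1]; [|rewrite k1; exact (k2 x hx)].
    pose proof (Ltheta_iota_supp_lt hx).
    apply (IH _ (iota x)); auto; lia.
  - apply theta_lt_unfold; right; split; [exact (lt_trans _ _ _ h2 h1)|].
    exists y; split; [exact hy|left; exact (below_c y hy k2)].
Qed.

Lemma theta_lt_total_bounded n a b :
  Lt a + Lt b <= n -> tlt a b \/ a = b \/ tlt b a.
Proof.
  revert a b; induction n as [|n IH]; intros a b hn.
  { pose proof (Ltheta_pos a); lia. }
  (* If s < t but some iota x with x in supp s is not below vartheta t, then
     vartheta t <= iota x by induction, so vartheta t < vartheta s by clause (b). *)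
  assert (comparable : forall s t, Lt (vartheta s) + Lt (vartheta t) <= S n ->
            lt s t -> tlt (vartheta s) (vartheta t) \/ tlt (vartheta t) (vartheta s)).
  { intros s t hst e.
    destruct (classic (forall x, In x (supp T s) -> tlt (iota x) (vartheta t)))
      as [H|H]; [left; apply theta_lt_unfold; left; auto|right].
    apply not_all_ex_not in H; destruct H as [x H].
    apply imply_to_and in H; destruct H as [hx H].
    apply theta_lt_unfold; right; split; [exact e|].
    exists x; split; [exact hx|].
    pose proof (Ltheta_iota_supp_lt hx).
    destruct (IH (iota x) (vartheta t)) as [k|[k|k]];
      [lia|contradiction|now right|now left]. }
  destruct a as [s], b as [t].
  destruct (lt_total s t) as [e|[<-|e]]; [| auto |].
  - destruct (comparable s t hn e); auto.
  - destruct (comparable t s ltac:(lia) e); auto.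
Qed.

Lemma theta_lt_linear : is_linear_order tlt.
Proof.
  split; [|split].
  - exact theta_lt_irrefl.
  - intros a b c; exact (theta_lt_trans_bounded a b c (le_n _)).
  - intros a b; exact (theta_lt_total_bounded a b (le_n _)).
Qed.

End Order.

Lemma theta_map_lt (T : praedilator) (X Y : LO) (f : Emb X Y)
  (iota : X -> theta T X) (L : X -> nat) (HBH : BH_system iota L)
  (iota' : Y -> theta T Y) (L' : Y -> nat) (HBH' : BH_system iota' L')
  (hf : forall x, iota' (f x) = theta_map f (iota x)) :
  forall a b, theta_lt iota L a b ->
    theta_lt iota' L' (theta_map f a) (theta_map f b).
Proof.
  enough (H : forall n a b, Ltheta L a + Ltheta L b <= n -> theta_lt iota L a b ->
               theta_lt iota' L' (theta_map f a) (theta_map f b))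
    by (intros a b; exact (H _ a b (le_n _))).
  intros n; induction n as [|n IH]; intros a b hn h.
  { pose proof (Ltheta_pos L a); lia. }
  destruct a as [s], b as [t]; simpl theta_map.
  rewrite (theta_lt_unfold HBH) in h; rewrite (theta_lt_unfold HBH'); simpl.
  destruct h as [[h k]|[h [y [hy k]]]]; [left|right];
    split; try exact (emb_mono (Tmap T f) h).
  - intros z hz; apply supp_nat, in_map_iff in hz; destruct hz as [x [<- hx]].
    rewrite hf; pose proof (Ltheta_iota_supp_lt HBH hx).
    apply (IH (iota x) (vartheta t)); auto; lia.
  - exists (f y); split; [apply supp_nat, in_map, hy|rewrite hf].
    destruct k as [k|k]; [left|right; rewrite <- k; reflexivity].
    pose proof (Ltheta_iota_supp_lt HBH hy).
    apply (IH (vartheta s) (iota y)); auto; lia.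
Qed.

Lemma iota_next_theta_map (T : praedilator) (X : LO) (iota : X -> theta T X)
  (L : X -> nat) (Hlin : is_linear_order (theta_lt iota L))
  (Hm : iota_mono iota L) (a : ThetaLO Hlin) :
  iota_next Hlin Hm a = theta_map (@MkEmb X (ThetaLO Hlin) iota Hm) a.
Proof. destruct a; reflexivity. Qed.

Theorem theorem3p9 (T : praedilator) (X : LO) (iota : X -> theta T X)
  (L : X -> nat) (HBH : BH_system iota L)
  (Hlin : is_linear_order (theta_lt iota L)) (Hm : iota_mono iota L) :
  BH_system (iota_next Hlin Hm) (Ltheta L) /\
  good (iota_next Hlin Hm) (Ltheta L).
Proof.
  set (e := @MkEmb X (ThetaLO Hlin) iota Hm).
  assert (HBH' : BH_system (iota_next Hlin Hm) (Ltheta L)).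
  { intros a; rewrite iota_next_theta_map.
    apply Ltheta_theta_map; exact HBH. }
  split; [exact HBH'|split; [exact (theta_lt_linear HBH')|]].
  intros a b hab; rewrite !iota_next_theta_map.
  apply (theta_map_lt e HBH HBH'); [|exact hab].
  intros x; apply iota_next_theta_map.
Qed.
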